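(* A binary relation $\succsim$ on $l_\infty$ satisfies Weak order, Continuity, ICRP, Convexity, Monotone continuity, ISU, IOU, Strong monotonicity and IDIS if and only if there exists a unique $\delta\in(0,1)$ such that $$I(x)=(1-\delta)\sum_{t=0}^{\infty}\delta^t x_t$$ is a constant equivalent representing $\succsim$.
   Context: $l_\infty$: real bounded sequences $x=(x_0,x_1,\dots)$ with sup norm; $\theta\in\mathbb R$ also denotes a constant sequence; $x\ge y$ coordinatewise, $x>y$ means $x\ge y$ and $x\ne y$. A constant equivalent representing $\succsim$ is $I:l_\infty\to\mathbb R$ with $x\sim I(x)$ and $x\succsim y\iff I(x)\ge I(y)$. $xAy$ equals $x$ on $A$ and $y$ off $A$; $(E_n)\downarrow\emptyset$ means decreasing with empty intersection. Weak order: complete, transitive. Strong monotonicity: $x\ge y\Rightarrow x\succsim y$ and $x>y\Rightarrow x\succ y$. Continuity: for $x\succsim y\succsim z$ the sets $\{\alpha\in[0,1]:\alpha x+(1-\alpha)z\succsim y\}$, $\{\alpha\in[0,1]:y\succsim\alpha x+(1-\alpha)z\}$ are closed. ICRP: $x\succsim y\Rightarrow x+\theta\succsim y+\theta$. Convexity: $x\succsim\theta,y\succsim\theta\Rightarrow\lambda x+(1-\lambda)y\succsim\theta$ for $\lambda\in[0,1]$. Monotone continuity: if $x\succ\theta$ and $(E_n)\downarrow\emptyset$, then for every $k\in\mathbb R$ there is $n_0$ with $kE_{n_0}x\succ\theta$. ISU: $x\succsim y$, $\alpha\ge 0\Rightarrow\alpha x\succsim\alpha y$. IOU: $x\sim y\Rightarrow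 x+z\sim y+z$ for all $z\in l_\infty$. IDIS: $x+d\succsim x\Rightarrow x+(0,d)\succsim x$, where $(0,d)=(0,d_0,d_1,\dots)$. *)

From Stdlib Require Import Reals Rtopology.
From Coquelicot Require Import Coquelicot.
Open Scope R_scope.

Definition seqR := nat -> R.
Definition linf (x : seqR) : Prop := exists M, forall t, Rabs (x t) <= M.

Definition cst (th : R) : seqR := fun _ => th.
Definition sadd (x y : seqR) : seqR := fun t => x t + y t.
Definition sscal (a : R) (x : seqR) : seqR := fun t => a * x t.
Definition mix (a : R) (x z : seqR) : seqR := fun t => a * x t + (1 - a) * z t.
(* x A y : x on A, y off A (subsets of nat represented by boolean predicates) *)
Definition on_set (A : nat -> bool) (x y : seqR) : seqR :=
  fun t => if A t then x t else y t.
Definition shift0 (d : seqR) : seqR :=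
  fun t => match t with O => 0 | S t' => d t' end.

Definition sge (x y : seqR) : Prop := forall t, y t <= x t.
Definition sgt (x y : seqR) : Prop := sge x y /\ x <> y.

Definition sim (pref : seqR -> seqR -> Prop) (x y : seqR) := pref x y /\ pref y x.
Definition spref (pref : seqR -> seqR -> Prop) (x y : seqR) := pref x y /\ ~ pref y x.

Definition weak_order (pref : seqR -> seqR -> Prop) : Prop :=
  (forall x y, linf x -> linf y -> pref x y \/ pref y x) /\
  (forall x y z, linf x -> linf y -> linf z -> pref x y -> pref y z -> pref x z).

Definition strong_monotonicity (pref : seqR -> seqR -> Prop) : Prop :=
  forall x y, linf x -> linf y ->
    (sge x y -> pref x y) /\ (sgt x y -> spref pref x y).

Definition pref_continuity (pref : seqR -> seqR -> Prop) : Prop :=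
  forall x y z, linf x -> linf y -> linf z -> pref x y -> pref y z ->
    closed_set (fun a => 0 <= a <= 1 /\ pref (mix a x z) y) /\
    closed_set (fun a => 0 <= a <= 1 /\ pref y (mix a x z)).

Definition ICRP (pref : seqR -> seqR -> Prop) : Prop :=
  forall x y (th : R), linf x -> linf y ->
    pref x y -> pref (sadd x (cst th)) (sadd y (cst th)).

Definition convexity (pref : seqR -> seqR -> Prop) : Prop :=
  forall x y (th : R) (l : R), linf x -> linf y ->
    pref x (cst th) -> pref y (cst th) -> 0 <= l <= 1 ->
    pref (mix l x y) (cst th).

Definition decr_to_empty (E : nat -> nat -> bool) : Prop :=
  (forall n t, E (S n) t = true -> E n t = true) /\
  (forall t, exists n, E n t = false).

Definition monotone_continuity (pref : seqR -> seqR -> Prop) : Prop :=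
  forall x (th : R) (E : nat -> nat -> bool), linf x ->
    spref pref x (cst th) -> decr_to_empty E ->
    forall k : R, exists n0, spref pref (on_set (E n0) (cst k) x) (cst th).

Definition ISU (pref : seqR -> seqR -> Prop) : Prop :=
  forall x y (a : R), linf x -> linf y -> pref x y -> 0 <= a ->
    pref (sscal a x) (sscal a y).

Definition IOU (pref : seqR -> seqR -> Prop) : Prop :=
  forall x y z, linf x -> linf y -> linf z -> sim pref x y ->
    sim pref (sadd x z) (sadd y z).

Definition IDIS (pref : seqR -> seqR -> Prop) : Prop :=
  forall x d, linf x -> linf d -> pref (sadd x d) x ->
    pref (sadd x (shift0 d)) x.

Definition const_equiv_rep (pref : seqR -> seqR -> Prop) (I : seqR -> R) : Prop :=
  (forall x, linf x -> sim pref x (cst (I x))) /\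
  (forall x y, linf x -> linf y -> (pref x y <-> I x >= I y)).

Definition disc_util (delta : R) (x : seqR) : R :=
  (1 - delta) * Series (fun t => delta ^ t * x t).

From Stdlib Require Import Reals Rtopology Lra Lia.
From Stdlib Require Import Classical ClassicalEpsilon FunctionalExtensionality.
From Coquelicot Require Import Coquelicot.
Open Scope R_scope.

(* Necessity: the discounted sum D is linear, strictly monotone, fixes constants, satisfies
   D(0,x) = delta D(x) and is at most delta^(N+1) sup|x| on the N-th tail; each axiom is then a
   short computation.
   Sufficiency: weak order, strong monotonicity and continuity give a constant equivalent I by
   an intermediate value argument on the segment between two bounding constants.  ICRP, IOU
   and ISU make I additive and homogeneous, hence a monotone linear functional.  IDIS says that
   the kernel of I is invariant under x |-> (0,x), which forces the weights mu_t = I(e_t) to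
   be geometric, mu_t = mu_0 delta^t.  Monotone continuity makes I small on tails, so
   I(x) = sum_t mu_t x_t; for x = 1 this gives delta < 1 and mu_0 = 1 - delta.  Uniqueness: e_0 has utility 1 - delta. *)

Definition unit_seq (t : nat) : seqR := fun s => if Nat.eqb s t then 1 else 0.
Definition trunc (N : nat) (x : seqR) : seqR := fun t => if Nat.leb t N then x t else 0.
Definition tail (N : nat) (x : seqR) : seqR := fun t => if Nat.leb t N then 0 else x t.

Lemma linf_bound x : linf x -> exists M, 0 <= M /\ forall t, Rabs (x t) <= M.
Proof.
  intros [M HM]; exists M; split; [|exact HM].
  exact (Rle_trans _ _ _ (Rabs_pos (x 0%nat)) (HM 0%nat)).
Qed.

Lemma linf_cst c : linf (cst c).
Proof. exists (Rabs c); intros; apply Rle_refl. Qed.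

Lemma linf_sadd x y : linf x -> linf y -> linf (sadd x y).
Proof.
  intros [M HM] [N HN]; exists (M + N); intro t.
  apply (Rle_trans _ _ _ (Rabs_triang _ _)), Rplus_le_compat; auto.
Qed.

Lemma linf_sscal a x : linf x -> linf (sscal a x).
Proof.
  intros [M HM]; exists (Rabs a * M); intro t; unfold sscal; rewrite Rabs_mult.
  apply Rmult_le_compat_l; [apply Rabs_pos | apply HM].
Qed.

Lemma linf_mix a x z : linf x -> linf z -> linf (mix a x z).
Proof. intros; apply (linf_sadd (sscal a x) (sscal (1 - a) z)); apply linf_sscal; auto. Qed.

Lemma linf_pointwise_le x y : linf y -> (forall t, Rabs (x t) <= Rabs (y t)) -> linf x.
Proof. intros [M HM] H; exists M; intro t; exact (Rle_trans _ _ _ (H t) (HM t)). Qed.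

Lemma linf_on_set A x y : linf x -> linf y -> linf (on_set A x y).
Proof.
  intros [M HM] [N HN]; exists (Rabs M + Rabs N); intro t; unfold on_set.
  pose proof (Rle_abs M); pose proof (Rle_abs N); pose proof (Rabs_pos M); pose proof (Rabs_pos N).
  destruct (A t); [specialize (HM t) | specialize (HN t)]; lra.
Qed.

Lemma linf_shift0 d : linf d -> linf (shift0 d).
Proof.
  intros Hd; destruct (linf_bound d Hd) as [M [HM0 HM]]; exists M.
  intros [|t]; simpl; [rewrite Rabs_R0 |]; auto.
Qed.

Lemma linf_trunc N x : linf x -> linf (trunc N x).
Proof.
  intros Hx; apply (linf_pointwise_le _ _ Hx); intro t; unfold trunc.
  destruct (Nat.leb t N); [|rewrite Rabs_R0; apply Rabs_pos]; apply Rle_refl.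
Qed.

Lemma linf_tail N x : linf x -> linf (tail N x).
Proof.
  intros Hx; apply (linf_pointwise_le _ _ Hx); intro t; unfold tail.
  destruct (Nat.leb t N); [rewrite Rabs_R0; apply Rabs_pos|]; apply Rle_refl.
Qed.

Lemma linf_unit_seq t : linf (unit_seq t).
Proof.
  apply (linf_pointwise_le _ _ (linf_cst 1)); intro s; unfold unit_seq, cst.
  destruct (Nat.eqb s t); [|rewrite Rabs_R0; apply Rabs_pos]; apply Rle_refl.
Qed.

#[local] Hint Resolve linf_cst linf_sadd linf_sscal linf_mix linf_on_set linf_shift0
  linf_trunc linf_tail linf_unit_seq : core.

Lemma shift0_unit_seq t : shift0 (unit_seq t) = unit_seq (S t).
Proof. apply functional_extensionality; intros [|s]; reflexivity. Qed.

Lemma tail_0_cst c : tail 0 (cst c) = shift0 (cst c).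
Proof. apply functional_extensionality; intros [|s]; reflexivity. Qed.

Lemma tail_S_cst N c : tail (S N) (cst c) = shift0 (tail N (cst c)).
Proof. apply functional_extensionality; intros [|s]; reflexivity. Qed.

Lemma unit_seq_0 : unit_seq 0 = sadd (cst 1) (sscal (-1) (tail 0 (cst 1))).
Proof.
  apply functional_extensionality; intros [|s]; unfold unit_seq, sadd, sscal, tail, cst;
    simpl; ring.
Qed.

Lemma shift0_sadd x y : shift0 (sadd x y) = sadd (shift0 x) (shift0 y).
Proof. apply functional_extensionality; intros [|s]; unfold sadd; simpl; ring. Qed.

Lemma shift0_sscal a x : shift0 (sscal a x) = sscal a (shift0 x).
Proof. apply functional_extensionality; intros [|s]; unfold sscal; simpl; ring. Qed.

Lemma trunc_add_tail N x : sadd (trunc N x) (tail N x) = x.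
Proof.
  apply functional_extensionality; intro t; unfold sadd, trunc, tail.
  destruct (Nat.leb t N); ring.
Qed.

Lemma trunc_0 x : trunc 0 x = sscal (x 0%nat) (unit_seq 0).
Proof.
  apply functional_extensionality; intros [|s]; unfold trunc, sscal, unit_seq; simpl; ring.
Qed.

Lemma trunc_S N x : trunc (S N) x = sadd (trunc N x) (sscal (x (S N)) (unit_seq (S N))).
Proof.
  apply functional_extensionality; intro t; unfold sadd, sscal, trunc, unit_seq.
  destruct (Nat.leb_spec t (S N)), (Nat.leb_spec t N), (Nat.eqb_spec t (S N));
    subst; try lia; ring.
Qed.

Section DiscountedUtility.

Variable d : R.
Hypothesis Hd : 0 < d < 1.

Lemma ex_series_disc x : linf x -> ex_series (fun t => d ^ t * x t).
Proof.
  intros Hx; destruct (linf_bound x Hx) as [M [HM0 HM]].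
  apply ex_series_Rabs, (@ex_series_le R_AbsRing R_CompleteNormedModule _ (fun t => M * d ^ t)).
  - intro t; change (Rabs (Rabs (d ^ t * x t)) <= M * d ^ t).
    rewrite Rabs_Rabsolu, Rabs_mult, Rabs_right, Rmult_comm by (apply Rle_ge, pow_le; lra).
    apply Rmult_le_compat_r; [apply pow_le; lra | apply HM].
  - apply (ex_series_scal_l M (fun t => d ^ t)), ex_series_geom; rewrite Rabs_right; lra.
Qed.

Lemma disc_util_add x y : linf x -> linf y ->
  disc_util d (sadd x y) = disc_util d x + disc_util d y.
Proof.
  intros Hx Hy; unfold disc_util, sadd.
  rewrite (Series_ext _ (fun t => d ^ t * x t + d ^ t * y t)) by (intro; ring).
  rewrite Series_plus by (apply ex_series_disc; auto); ring.
Qed.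

Lemma disc_util_scal a x : disc_util d (sscal a x) = a * disc_util d x.
Proof.
  unfold disc_util, sscal.
  rewrite (Series_ext _ (fun t => a * (d ^ t * x t))), Series_scal_l by (intro; ring); ring.
Qed.

Lemma disc_util_cst c : disc_util d (cst c) = c.
Proof.
  unfold disc_util, cst.
  rewrite (Series_ext _ (fun t => c * d ^ t)), Series_scal_l by (intro; ring).
  rewrite (is_series_unique (pow d) _ (is_series_geom d ltac:(rewrite Rabs_right; lra))).
  field; lra.
Qed.

Lemma disc_util_mix a x z : linf x -> linf z ->
  disc_util d (mix a x z) = a * disc_util d x + (1 - a) * disc_util d z.
Proof.
  intros Hx Hz; change (mix a x z) with (sadd (sscal a x) (sscal (1 - a) z)).
  rewrite disc_util_add, !disc_util_scal; auto.
Qed.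

Lemma disc_util_shift0 x : linf x -> disc_util d (shift0 x) = d * disc_util d x.
Proof.
  intros Hx; unfold disc_util.
  rewrite Series_incr_1 by (apply ex_series_disc; auto); simpl.
  rewrite (Series_ext _ (fun t => d * (d ^ t * x t))), Series_scal_l by (intro; ring); ring.
Qed.

Lemma disc_util_nonneg x : linf x -> sge x (cst 0) -> 0 <= disc_util d x.
Proof.
  intros Hx Hpos; unfold disc_util; apply Rmult_le_pos; [lra|].
  rewrite <- (Rmult_0_l (Series (fun t => d ^ t * x t))), <- Series_scal_l.
  apply Series_le; [|apply ex_series_disc; auto].
  intro t; specialize (Hpos t); unfold cst in Hpos.
  rewrite Rmult_0_l; split; [lra | apply Rmult_le_pos; [apply pow_le|]; lra].
Qed.

Lemma disc_util_mono x y : linf x -> linf y -> sge x y -> disc_util d y <= disc_util d x.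
Proof.
  intros Hx Hy Hxy.
  assert (H : 0 <= disc_util d (sadd x (sscal (-1) y))).
  { apply disc_util_nonneg; auto; intro t; specialize (Hxy t); unfold sadd, sscal, cst; lra. }
  rewrite disc_util_add, disc_util_scal in H; auto; lra.
Qed.

Lemma disc_util_tail_cst N : disc_util d (tail N (cst 1)) = d ^ S N.
Proof.
  induction N as [|N IH].
  - rewrite tail_0_cst, disc_util_shift0, disc_util_cst; auto; ring.
  - rewrite tail_S_cst, disc_util_shift0, IH; auto.
Qed.

Lemma disc_util_unit_seq t : disc_util d (unit_seq t) = (1 - d) * d ^ t.
Proof.
  induction t as [|t IH].
  - rewrite unit_seq_0, disc_util_add, disc_util_scal, disc_util_cst, disc_util_tail_cst;
      auto; ring.
  - rewrite <- shift0_unit_seq, disc_util_shift0, IH; auto; simpl; ring.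
Qed.

Lemma disc_util_strict_mono x y t0 : linf x -> linf y -> sge x y -> y t0 < x t0 ->
  disc_util d y < disc_util d x.
Proof.
  intros Hx Hy Hxy Ht0.
  assert (H : disc_util d (sadd y (sscal (x t0 - y t0) (unit_seq t0))) <= disc_util d x).
  { apply disc_util_mono; auto; intro t; specialize (Hxy t); unfold sadd, sscal, unit_seq.
    destruct (Nat.eqb_spec t t0); subst; lra. }
  rewrite disc_util_add, disc_util_scal, disc_util_unit_seq in H; auto.
  assert (0 < (x t0 - y t0) * ((1 - d) * d ^ t0)).
  { apply Rmult_lt_0_compat; [lra | apply Rmult_lt_0_compat; [lra | apply pow_lt; lra]]. }
  lra.
Qed.

End DiscountedUtility.

Lemma closed_set_ext (P Q : R -> Prop) :
  (forall a, P a <-> Q a) -> closed_set Q -> closed_set P.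
Proof.
  intros E HQ a Ha; apply neighbourhood_P1 with (complementary Q).
  - intros y Hy HPy; apply Hy, E, HPy.
  - apply HQ; intro HQa; apply Ha, E, HQa.
Qed.

Lemma closed_set_and (A B : R -> Prop) :
  closed_set A -> closed_set B -> closed_set (fun a => A a /\ B a).
Proof.
  intros HA HB a Ha; apply not_and_or in Ha.
  destruct Ha as [Ha | Ha]; [apply HA in Ha | apply HB in Ha];
    (eapply neighbourhood_P1; [|exact Ha]); intros y Hy [HAy HBy]; auto.
Qed.

Lemma closed_set_affine_nonneg p q : closed_set (fun a => 0 <= p * a + q).
Proof.
  intros a Ha; apply Rnot_le_lt in Ha.
  pose proof (Rabs_pos p) as Hp0.
  assert (Hr : 0 < - (p * a + q) / (Rabs p + 1)) by (apply Rdiv_lt_0_compat; lra).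
  exists (mkposreal _ Hr); intros y Hy Hy'; unfold disc in Hy; simpl in Hy.
  assert (Hp : Rabs p * (- (p * a + q) / (Rabs p + 1)) < - (p * a + q)).
  { apply Rmult_lt_reg_r with (Rabs p + 1); [lra|].
    replace (Rabs p * (- (p * a + q) / (Rabs p + 1)) * (Rabs p + 1))
      with (Rabs p * - (p * a + q)) by (field; lra).
    nra. }
  assert (Hpy : Rabs (p * (y - a)) < - (p * a + q)).
  { rewrite Rabs_mult; eapply Rle_lt_trans; [|exact Hp].
    apply Rmult_le_compat_l; [apply Rabs_pos | lra]. }
  apply Rabs_def2 in Hpy; lra.
Qed.

Lemma closed_set_unit_affine p q :
  closed_set (fun a => 0 <= a <= 1 /\ 0 <= p * a + q).
Proof.
  apply (closed_set_ext _ (fun a => (0 <= 1 * a + 0 /\ 0 <= -1 * a + 1) /\ 0 <= p * a + q)).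
  - intro a; split; intros [H1 H2]; split; auto; lra.
  - repeat apply closed_set_and; apply closed_set_affine_nonneg.
Qed.

Lemma closed_cover_unit_meet (A B : R -> Prop) :
  closed_set A -> closed_set B -> (forall a, 0 <= a <= 1 -> A a \/ B a) ->
  (forall b, B b -> b <= 1) -> A 1 -> B 0 -> exists m, A m /\ B m.
Proof.
  intros HA HB Hcover HB1 A1 B0.
  destruct (completeness B) as [m [Hub Hlub]]; [exists 1; exact HB1 | exists 0; exact B0|].
  assert (Hm1 : m <= 1) by (apply Hlub; exact HB1).
  assert (Bm : B m).
  { apply (adherence_P2 _ HB); intros V [[del Hdel0] Hdel]; simpl in Hdel.
    assert (Happrox : exists b, B b /\ m - del < b).
    { apply NNPP; intro Hno; assert (m <= m - del); [|lra].
      apply Hlub; intros b Bb; apply Rnot_lt_le; intro Hb; apply Hno; exists b; auto. }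
    destruct Happrox as [b [Bb Hb]]; exists b; split; [|exact Bb].
    apply Hdel; unfold disc; pose proof (Hub b Bb); rewrite Rabs_left1; simpl; lra. }
  exists m; split; [|exact Bm].
  destruct (Req_dec m 1) as [-> | Hne]; [exact A1|].
  apply (adherence_P2 _ HA); intros V [[del Hdel0] Hdel]; simpl in Hdel.
  assert (Ha : m < Rmin (m + del / 2) 1) by (apply Rmin_glb_lt; lra).
  pose proof (Rmin_l (m + del / 2) 1); pose proof (Rmin_r (m + del / 2) 1).
  exists (Rmin (m + del / 2) 1); split.
  - apply Hdel; unfold disc; rewrite Rabs_right; simpl; lra.
  - pose proof (Hub 0 B0).
    destruct (Hcover (Rmin (m + del / 2) 1)) as [Aa | Ba]; [lra | exact Aa |].
    pose proof (Hub _ Ba); lra.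
Qed.

Lemma decr_to_empty_stays_false E : decr_to_empty E ->
  forall n m t, (n <= m)%nat -> E n t = false -> E m t = false.
Proof.
  intros [Hdecr _] n m t Hnm Hn; induction Hnm as [|m _ IH]; auto.
  destruct (E (S m) t) eqn:HS; auto; apply Hdecr in HS; congruence.
Qed.

Lemma decr_to_empty_initial E : decr_to_empty E ->
  forall N, exists n, forall t, (t <= N)%nat -> E n t = false.
Proof.
  intros HE N; induction N as [|N [n1 Hn1]].
  - destruct (proj2 HE 0%nat) as [n Hn]; exists n; intros t Ht.
    replace t with 0%nat by lia; exact Hn.
  - destruct (proj2 HE (S N)) as [n2 Hn2]; exists (Nat.max n1 n2); intros t Ht.
    destruct (Nat.eq_dec t (S N)) as [-> | Hne].
    + apply (decr_to_empty_stays_false E HE n2); [lia | exact Hn2].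
    + apply (decr_to_empty_stays_false E HE n1); [lia | apply Hn1; lia].
Qed.

Section DiscountedRepresentation.

Variables (d : R) (pref : seqR -> seqR -> Prop).
Hypothesis Hd : 0 < d < 1.
Hypothesis Hrep : const_equiv_rep pref (disc_util d).

Let rep x y : linf x -> linf y -> pref x y <-> disc_util d x >= disc_util d y :=
  proj2 Hrep x y.

Lemma rep_spref x y : linf x -> linf y -> spref pref x y <-> disc_util d x > disc_util d y.
Proof. intros Hx Hy; unfold spref; rewrite (rep x y), (rep y x) by auto; lra. Qed.

Lemma rep_sim x y : linf x -> linf y -> sim pref x y <-> disc_util d x = disc_util d y.
Proof. intros Hx Hy; unfold sim; rewrite (rep x y), (rep y x) by auto; lra. Qed.

Lemma rep_weak_order : weak_order pref.
Proof.
  split.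
  - intros x y Hx Hy; rewrite (rep x y), (rep y x) by auto; lra.
  - intros x y z Hx Hy Hz; rewrite (rep x y), (rep y z), (rep x z) by auto; lra.
Qed.

Lemma rep_continuity : pref_continuity pref.
Proof.
  intros x y z Hx Hy Hz _ _; split.
  - apply (closed_set_ext _ (fun a => 0 <= a <= 1 /\
      0 <= (disc_util d x - disc_util d z) * a + (disc_util d z - disc_util d y)));
      [|apply closed_set_unit_affine].
    intro a; rewrite rep, disc_util_mix by auto; split; intros [Ha H]; split; auto; lra.
  - apply (closed_set_ext _ (fun a => 0 <= a <= 1 /\
      0 <= (disc_util d z - disc_util d x) * a + (disc_util d y - disc_util d z)));
      [|apply closed_set_unit_affine].
    intro a; rewrite rep, disc_util_mix by auto; split; intros [Ha H]; split; auto; lra.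
Qed.

Lemma rep_ICRP : ICRP pref.
Proof.
  intros x y th Hx Hy; rewrite (rep x y), rep, !disc_util_add, disc_util_cst by auto; lra.
Qed.

Lemma rep_convexity : convexity pref.
Proof.
  intros x y th l Hx Hy; rewrite !rep, disc_util_mix, !disc_util_cst by auto.
  intros Hxt Hyt Hl; nra.
Qed.

Lemma rep_ISU : ISU pref.
Proof. intros x y a Hx Hy; rewrite (rep x y), rep, !disc_util_scal by auto; nra. Qed.

Lemma rep_IOU : IOU pref.
Proof. intros x y z Hx Hy Hz; rewrite !rep_sim, !disc_util_add by auto; lra. Qed.

Lemma rep_strong_monotonicity : strong_monotonicity pref.
Proof.
  intros x y Hx Hy; split.
  - intro Hxy; apply rep, Rle_ge, disc_util_mono; auto.
  - intros [Hxy Hne]; apply rep_spref; auto.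
    destruct (not_all_ex_not _ _ (fun H => Hne (functional_extensionality x y H))) as [t0 Ht0].
    apply (disc_util_strict_mono d Hd x y t0); auto.
    specialize (Hxy t0); lra.
Qed.

Lemma rep_IDIS : IDIS pref.
Proof.
  intros x dd Hx Hdd; rewrite !rep, !disc_util_add, disc_util_shift0 by auto.
  intro H; nra.
Qed.

Lemma rep_monotone_continuity : monotone_continuity pref.
Proof.
  intros x th E Hx Hxth HE k.
  apply rep_spref in Hxth; auto; rewrite disc_util_cst in Hxth by exact Hd.
  (* E n misses [0, N], and overwriting x by k after time N costs at most K d^(N+1). *)
  destruct (linf_bound x Hx) as [M [HM0 HM]]; set (K := Rabs k + M).
  assert (HK : 0 <= K) by (pose proof (Rabs_pos k); unfold K; lra).
  destruct (pow_lt_1_zero d ltac:(rewrite Rabs_right; lra)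
              ((disc_util d x - th) / (K + 1))) as [N HN];
    [apply Rdiv_lt_0_compat; lra|].
  specialize (HN (S N) (Nat.le_succ_diag_r N)).
  rewrite Rabs_right in HN by (apply Rle_ge, pow_le; lra).
  destruct (decr_to_empty_initial E HE N) as [n Hn]; exists n.
  apply rep_spref; auto; rewrite disc_util_cst by exact Hd.
  assert (Hlow : disc_util d (sadd x (sscal (- K) (tail N (cst 1))))
                 <= disc_util d (on_set (E n) (cst k) x)).
  { apply disc_util_mono; auto; intro t; unfold on_set, sadd, sscal, tail, cst.
    destruct (Nat.leb_spec t N) as [Ht | Ht]; [rewrite Hn by exact Ht; lra|].
    pose proof (Rle_abs (x t)); pose proof (Rle_abs (- k)); rewrite Rabs_Ropp in *.
    pose proof (Rabs_pos k); specialize (HM t); destruct (E n t); unfold K; lra. }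
  rewrite disc_util_add, disc_util_scal, disc_util_tail_cst in Hlow by auto.
  assert (Hsmall : (K + 1) * d ^ S N < disc_util d x - th).
  { apply Rmult_lt_reg_r with (/ (K + 1)); [apply Rinv_0_lt_compat; lra|].
    replace ((K + 1) * d ^ S N * / (K + 1)) with (d ^ S N) by (field; lra); exact HN. }
  pose proof (pow_le d (S N) ltac:(lra)); nra.
Qed.

Lemma rep_axioms :
  weak_order pref /\ pref_continuity pref /\ ICRP pref /\ convexity pref /\
  monotone_continuity pref /\ ISU pref /\ IOU pref /\
  strong_monotonicity pref /\ IDIS pref.
Proof.
  exact (conj rep_weak_order (conj rep_continuity (conj rep_ICRP (conj rep_convexity
    (conj rep_monotone_continuity (conj rep_ISU (conj rep_IOU
    (conj rep_strong_monotonicity rep_IDIS)))))))).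
Qed.

End DiscountedRepresentation.

Definition implied_discount (I : seqR -> R) : R := I (unit_seq 1) / I (unit_seq 0).

Section LinearFunctional.

Variable I : seqR -> R.
Hypothesis I_add : forall x y, linf x -> linf y -> I (sadd x y) = I x + I y.
Hypothesis I_scal : forall a x, linf x -> I (sscal a x) = a * I x.
Hypothesis I_mono : forall x y, linf x -> linf y -> sge x y -> I y <= I x.
Hypothesis I_cst : forall c, I (cst c) = c.
Hypothesis I_unit_seq_pos : forall t, 0 < I (unit_seq t).
Hypothesis I_shift0_ker : forall x, linf x -> I x = 0 -> I (shift0 x) = 0.
Hypothesis I_tail_vanish : forall eps, 0 < eps -> exists N, I (tail N (cst 1)) < eps.

Let mu t := I (unit_seq t).
Let delta := implied_discount I.

Lemma I_unit_seq_rec t : mu (S t) * mu 0%nat = mu t * mu 1%nat.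
Proof.
  (* mu_t e_0 - mu_0 e_t lies in the kernel, hence so does its shift mu_t e_1 - mu_0 e_(t+1). *)
  set (x := sadd (sscal (mu t) (unit_seq 0)) (sscal (- mu 0%nat) (unit_seq t))).
  assert (Hx : I x = 0) by (unfold x; rewrite I_add, !I_scal by auto; unfold mu; ring).
  apply I_shift0_ker in Hx; [|unfold x; auto].
  unfold x in Hx; rewrite shift0_sadd, !shift0_sscal, !shift0_unit_seq, I_add, !I_scal in Hx
    by auto.
  unfold mu in *; lra.
Qed.

Lemma I_unit_seq_geom t : mu t = mu 0%nat * delta ^ t.
Proof.
  pose proof (I_unit_seq_pos 0) as H0.
  induction t as [|t IH]; [simpl; ring|].
  apply Rmult_eq_reg_r with (mu 0%nat); [|unfold mu; lra].
  rewrite I_unit_seq_rec, IH; unfold delta, implied_discount, mu in *; simpl; field; lra.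
Qed.

Lemma I_trunc N x : linf x -> I (trunc N x) = sum_f_R0 (fun t => mu t * x t) N.
Proof.
  intros Hx; induction N as [|N IH].
  - rewrite trunc_0, I_scal by auto; simpl; unfold mu; ring.
  - rewrite trunc_S, I_add, I_scal, IH by auto; simpl; unfold mu; ring.
Qed.

Lemma I_tail_cst_antitone N n : (N <= n)%nat -> I (tail n (cst 1)) <= I (tail N (cst 1)).
Proof.
  intros HNn; apply I_mono; auto; intro t; unfold tail, cst.
  destruct (Nat.leb_spec t n), (Nat.leb_spec t N); lra || lia.
Qed.

Lemma I_tail_bound N x M : (forall t, Rabs (x t) <= M) ->
  Rabs (I (tail N x)) <= M * I (tail N (cst 1)).
Proof.
  intros HM; assert (Hx : linf x) by (exists M; exact HM).
  assert (Hlow : I (sscal (- M) (tail N (cst 1))) <= I (tail N x)).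
  { apply I_mono; auto; intro t; unfold sscal, tail, cst.
    specialize (HM t); apply Rabs_le_between in HM; destruct (Nat.leb t N); lra. }
  assert (Hup : I (tail N x) <= I (sscal M (tail N (cst 1)))).
  { apply I_mono; auto; intro t; unfold sscal, tail, cst.
    specialize (HM t); apply Rabs_le_between in HM; destruct (Nat.leb t N); lra. }
  rewrite !I_scal in Hlow, Hup by auto; apply Rabs_le; lra.
Qed.

Lemma I_is_series x : linf x -> is_series (fun t => mu t * x t) (I x).
Proof.
  intros Hx; destruct (linf_bound x Hx) as [M [HM0 HM]].
  apply is_series_Reals; intros eps Heps.
  destruct (I_tail_vanish (eps / (M + 1))) as [N HN]; [apply Rdiv_lt_0_compat; lra|].
  exists N; intros n Hn; unfold Rdist.
  rewrite <- I_trunc by exact Hx; rewrite <- (trunc_add_tail n x) at 2.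
  rewrite I_add, Rminus_plus_distr, Rminus_diag, Rminus_0_l, Rabs_Ropp by auto.
  eapply Rle_lt_trans; [apply (I_tail_bound n x M HM)|].
  pose proof (I_tail_cst_antitone N n Hn).
  assert (0 <= I (tail n (cst 1))).
  { rewrite <- (I_cst 0); apply I_mono; auto; intro t; unfold tail, cst.
    destruct (Nat.leb t n); lra. }
  assert (Heps' : (M + 1) * (eps / (M + 1)) = eps) by (field; lra).
  nra.
Qed.

Lemma implied_discount_bounds : 0 < delta < 1.
Proof.
  pose proof (I_unit_seq_pos 0) as H0; pose proof (I_unit_seq_pos 1) as H1.
  assert (Hpos : 0 < delta) by (apply Rdiv_lt_0_compat; auto).
  split; [exact Hpos|]; apply Rnot_le_lt; intro Hge.
  pose proof (I_is_series (cst 1) (linf_cst 1)) as Hser; rewrite I_cst in Hser.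
  pose proof (ex_series_lim_0 _ (ex_intro _ 1 Hser)) as Hlim.
  assert (Hle : Rbar_le (mu 0%nat) 0).
  { refine (is_lim_seq_le _ _ _ _ _ (is_lim_seq_const _) Hlim).
    intro t; unfold cst; rewrite Rmult_1_r, (I_unit_seq_geom t).
    pose proof (pow_R1_Rle delta t Hge); unfold mu in *; nra. }
  simpl in Hle; unfold mu in *; lra.
Qed.

Lemma I_unit_seq_0 : mu 0%nat = 1 - delta.
Proof.
  pose proof implied_discount_bounds as Hd.
  assert (Hgeom : Series (fun t => mu t * cst 1 t) = mu 0%nat / (1 - delta)).
  { rewrite (Series_ext _ (fun t => mu 0%nat * delta ^ t)), Series_scal_l
      by (intro; unfold cst; rewrite I_unit_seq_geom; ring).
    rewrite (is_series_unique (pow delta) _ (is_series_geom delta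
      ltac:(rewrite Rabs_right; lra))); reflexivity. }
  rewrite (is_series_unique _ _ (I_is_series (cst 1) (linf_cst 1))), I_cst in Hgeom.
  apply (Rmult_eq_reg_r (/ (1 - delta))); [|apply Rinv_neq_0_compat; lra].
  rewrite Rinv_r by lra; exact (eq_sym Hgeom).
Qed.

Lemma I_eq_disc_util : 0 < delta < 1 /\ forall x, linf x -> I x = disc_util delta x.
Proof.
  split; [exact implied_discount_bounds|]; intros x Hx.
  unfold disc_util; rewrite <- Series_scal_l, <- (is_series_unique _ _ (I_is_series x Hx)).
  apply Series_ext; intro t; rewrite I_unit_seq_geom, I_unit_seq_0; ring.
Qed.

End LinearFunctional.

Definition const_equiv (pref : seqR -> seqR -> Prop) (x : seqR) : R :=
  epsilon (inhabits 0) (fun c => sim pref x (cst c)).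

Section ConstantEquivalent.

Variable pref : seqR -> seqR -> Prop.
Hypothesis WO : weak_order pref.
Hypothesis PC : pref_continuity pref.
Hypothesis IC : ICRP pref.
Hypothesis MC : monotone_continuity pref.
Hypothesis IS : ISU pref.
Hypothesis IO : IOU pref.
Hypothesis SM : strong_monotonicity pref.
Hypothesis ID : IDIS pref.

Local Notation I := (const_equiv pref).

Lemma pref_cst_le c c' : c' <= c -> pref (cst c) (cst c').
Proof. intros H; apply (proj1 (SM _ _ (linf_cst c) (linf_cst c'))); intro; unfold cst; lra. Qed.

Lemma pref_cst_iff c c' : pref (cst c) (cst c') <-> c' <= c.
Proof.
  split; [|apply pref_cst_le]; intro H; apply Rnot_lt_le; intro Hlt.
  destruct (proj2 (SM _ _ (linf_cst c') (linf_cst c))) as [_ Hn]; [split | exact (Hn H)].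
  - intro; unfold cst; lra.
  - intro E; apply (f_equal (fun f => f 0%nat)) in E; unfold cst in E; lra.
Qed.

Lemma const_equiv_exists x : linf x -> exists c, sim pref x (cst c).
Proof.
  intros Hx; destruct (linf_bound x Hx) as [M [HM0 HM]].
  assert (Hmix : forall a, mix a (cst M) (cst (- M)) = cst (a * M + (1 - a) * - M))
    by reflexivity.
  assert (Hup : pref (cst M) x).
  { apply (proj1 (SM _ _ (linf_cst M) Hx)); intro t; specialize (HM t).
    apply Rabs_le_between in HM; unfold cst; lra. }
  assert (Hlow : pref x (cst (- M))).
  { apply (proj1 (SM _ _ Hx (linf_cst (- M)))); intro t; specialize (HM t).
    apply Rabs_le_between in HM; unfold cst; lra. }
  destruct (PC _ _ _ (linf_cst M) Hx (linf_cst (- M)) Hup Hlow) as [CA CB].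
  destruct (closed_cover_unit_meet _ _ CA CB) as [m [[_ Am] [_ Bm]]].
  - intros a Ha; destruct (proj1 WO (mix a (cst M) (cst (- M))) x) as [H | H]; auto.
  - intros b [Hb _]; lra.
  - split; [lra|]; rewrite Hmix; replace (1 * M + (1 - 1) * - M) with M by ring; exact Hup.
  - split; [lra|]; rewrite Hmix; replace (0 * M + (1 - 0) * - M) with (- M) by ring; exact Hlow.
  - exists (m * M + (1 - m) * - M); rewrite <- Hmix; split; assumption.
Qed.

Lemma const_equiv_sim x : linf x -> sim pref x (cst (I x)).
Proof. intros Hx; unfold const_equiv; apply epsilon_spec, const_equiv_exists, Hx. Qed.

Lemma const_equiv_eq x c : linf x -> sim pref x (cst c) -> I x = c.
Proof.
  intros Hx [Hxc Hcx]; destruct (const_equiv_sim x Hx) as [HxI HIx].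
  pose proof (proj2 WO _ _ _ (linf_cst _) Hx (linf_cst _) HIx Hxc).
  pose proof (proj2 WO _ _ _ (linf_cst _) Hx (linf_cst _) Hcx HxI).
  rewrite pref_cst_iff in *; lra.
Qed.

Lemma const_equiv_cst c : I (cst c) = c.
Proof. apply const_equiv_eq; [apply linf_cst | split; apply pref_cst_le; lra]. Qed.

Lemma pref_iff_const_equiv x y : linf x -> linf y -> pref x y <-> I x >= I y.
Proof.
  intros Hx Hy; destruct (const_equiv_sim x Hx) as [HxI HIx].
  destruct (const_equiv_sim y Hy) as [HyI HIy].
  enough (E : pref x y <-> pref (cst (I x)) (cst (I y)))
    by (rewrite E, pref_cst_iff; split; intro; lra).
  pose proof (proj2 WO) as T; split; intro H.
  - apply (T _ x); auto; apply (T _ y); auto.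
  - apply (T _ (cst (I x))); auto; apply (T _ (cst (I y))); auto.
Qed.

Lemma const_equiv_mono x y : linf x -> linf y -> sge x y -> I y <= I x.
Proof.
  intros Hx Hy Hxy; apply Rge_le, pref_iff_const_equiv, (proj1 (SM x y Hx Hy)); auto.
Qed.

Lemma const_equiv_add_cst x th : linf x -> I (sadd x (cst th)) = I x + th.
Proof.
  intros Hx; destruct (const_equiv_sim x Hx) as [HxI HIx].
  apply const_equiv_eq; auto.
  split; [apply (IC x (cst (I x))) | apply (IC (cst (I x)) x)]; auto.
Qed.

Lemma const_equiv_sim_eq x y : linf x -> linf y -> sim pref x y -> I x = I y.
Proof. intros Hx Hy [Hxy Hyx]; rewrite pref_iff_const_equiv in Hxy, Hyx by auto; lra. Qed.

Lemma const_equiv_add x y : linf x -> linf y -> I (sadd x y) = I x + I y.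
Proof.
  intros Hx Hy.
  rewrite (const_equiv_sim_eq _ (sadd (cst (I x)) y))
    by (try apply IO; auto; apply const_equiv_sim, Hx).
  replace (sadd (cst (I x)) y) with (sadd y (cst (I x)))
    by (apply functional_extensionality; intro; unfold sadd; ring).
  rewrite const_equiv_add_cst; auto; ring.
Qed.

Lemma const_equiv_scal_nonneg a x : linf x -> 0 <= a -> I (sscal a x) = a * I x.
Proof.
  intros Hx Ha; destruct (const_equiv_sim x Hx) as [HxI HIx].
  apply const_equiv_eq; auto.
  split; [apply (IS x (cst (I x))) | apply (IS (cst (I x)) x)]; auto.
Qed.

Lemma const_equiv_scal a x : linf x -> I (sscal a x) = a * I x.
Proof.
  intros Hx; destruct (Rle_or_lt 0 a) as [Ha | Ha]; [apply const_equiv_scal_nonneg; auto|].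
  assert (H0 : I (sadd (sscal a x) (sscal (- a) x)) = 0).
  { replace (sadd (sscal a x) (sscal (- a) x)) with (cst 0)
      by (apply functional_extensionality; intro; unfold sadd, sscal, cst; ring).
    apply const_equiv_cst. }
  rewrite const_equiv_add, (const_equiv_scal_nonneg (- a)) in H0 by (auto; lra); lra.
Qed.

Lemma const_equiv_unit_seq_pos t : 0 < I (unit_seq t).
Proof.
  rewrite <- (const_equiv_cst 0); apply Rnot_le_lt; intro Hle.
  apply Rle_ge, (pref_iff_const_equiv (cst 0) (unit_seq t)) in Hle; auto.
  destruct (proj2 (SM _ _ (linf_unit_seq t) (linf_cst 0))) as [_ Hn]; [split | exact (Hn Hle)].
  - intro s; unfold unit_seq, cst; destruct (Nat.eqb s t); lra.
  - intro E; apply (f_equal (fun f => f t)) in E; unfold unit_seq, cst in E.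
    rewrite Nat.eqb_refl in E; lra.
Qed.

Lemma const_equiv_shift0_nonneg x : linf x -> 0 <= I x -> 0 <= I (shift0 x).
Proof.
  intros Hx Hpos.
  assert (Hpref : pref (sadd (cst 0) x) (cst 0))
    by (apply pref_iff_const_equiv; auto; rewrite const_equiv_add, !const_equiv_cst; auto; lra).
  apply ID, pref_iff_const_equiv in Hpref; auto.
  rewrite const_equiv_add, !const_equiv_cst in Hpref; auto; lra.
Qed.

Lemma const_equiv_shift0_ker x : linf x -> I x = 0 -> I (shift0 x) = 0.
Proof.
  intros Hx H0.
  pose proof (const_equiv_shift0_nonneg x Hx ltac:(lra)).
  pose proof (const_equiv_shift0_nonneg (sscal (-1) x) ltac:(auto)) as Hneg.
  rewrite shift0_sscal, !const_equiv_scal in Hneg; auto; lra.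
Qed.

Lemma const_equiv_tail_vanish eps : 0 < eps -> exists N, I (tail N (cst 1)) < eps.
Proof.
  intros Heps; set (E := fun n t => negb (Nat.leb t n)).
  assert (HE : decr_to_empty E).
  { split.
    - intros n t; unfold E.
      destruct (Nat.leb_spec t (S n)), (Nat.leb_spec t n); simpl; auto; lia.
    - intro t; exists t; unfold E; rewrite Nat.leb_refl; reflexivity. }
  assert (H0 : spref pref (cst 0) (cst (- eps))).
  { split; [apply pref_cst_le; lra | rewrite pref_cst_iff; lra]. }
  destruct (MC _ _ E (linf_cst 0) H0 HE (-1)) as [N [_ HN]]; exists N.
  replace (on_set (E N) (cst (-1)) (cst 0)) with (sscal (-1) (tail N (cst 1))) in HN
    by (apply functional_extensionality; intro t; unfold on_set, E, sscal, tail, cst;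
        destruct (Nat.leb t N); simpl; ring).
  rewrite pref_iff_const_equiv, const_equiv_scal, const_equiv_cst in HN; auto; lra.
Qed.

Lemma axioms_disc_util_rep :
  0 < implied_discount I < 1 /\ const_equiv_rep pref (disc_util (implied_discount I)).
Proof.
  destruct (I_eq_disc_util I const_equiv_add const_equiv_scal const_equiv_mono
    const_equiv_cst const_equiv_unit_seq_pos const_equiv_shift0_ker const_equiv_tail_vanish)
    as [Hd Hdisc].
  split; [exact Hd|]; split.
  - intros x Hx; rewrite <- Hdisc by exact Hx; apply const_equiv_sim, Hx.
  - intros x y Hx Hy; rewrite <- !Hdisc by assumption; apply pref_iff_const_equiv; assumption.
Qed.

End ConstantEquivalent.

Lemma const_equiv_rep_unique pref (I J : seqR -> R) x :
  const_equiv_rep pref I -> const_equiv_rep pref J -> (forall c, J (cst c) = c) ->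
  linf x -> I x = J x.
Proof.
  intros [HsimI _] [_ HJ] HJcst Hx; destruct (HsimI x Hx) as [H1 H2].
  rewrite HJ in H1, H2 by auto; rewrite HJcst in H1, H2; lra.
Qed.

Lemma disc_util_rep_unique pref d d' : 0 < d < 1 -> 0 < d' < 1 ->
  const_equiv_rep pref (disc_util d) -> const_equiv_rep pref (disc_util d') -> d' = d.
Proof.
  intros Hd Hd' Hrep Hrep'.
  pose proof (const_equiv_rep_unique pref _ _ (unit_seq 0) Hrep Hrep' (disc_util_cst d' Hd')
    (linf_unit_seq 0)) as H.
  rewrite !disc_util_unit_seq in H by assumption; simpl in H; lra.
Qed.

Theorem proposition3 (pref : seqR -> seqR -> Prop) :
  (weak_order pref /\ pref_continuity pref /\ ICRP pref /\ convexity pref /\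
   monotone_continuity pref /\ ISU pref /\ IOU pref /\
   strong_monotonicity pref /\ IDIS pref)
  <->
  (exists delta : R, (0 < delta < 1 /\ const_equiv_rep pref (disc_util delta)) /\
     forall delta' : R, 0 < delta' < 1 /\ const_equiv_rep pref (disc_util delta') ->
       delta' = delta).
Proof.
  split.
  - intros (WO & PC & IC & _ & MC & IS & IO & SM & ID).
    destruct (axioms_disc_util_rep pref WO PC IC MC IS IO SM ID) as [Hd Hrep].
    exists (implied_discount (const_equiv pref)); split; [split; assumption|].
    intros d' [Hd' Hrep']; exact (disc_util_rep_unique pref _ _ Hd Hd' Hrep Hrep').
  - intros [d [[Hd Hrep] _]]; exact (rep_axioms d pref Hd Hrep).
Qed.
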